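(* For $n\geq 1$, let $B_n(y,t)=\sum_{\sigma\in\mathcal{B}_n}y^{\mathsf{neg}\,\sigma}t^{\mathsf{des}_B\,\sigma}$. Then $$B_n(y, t)=(1+yt)^nP^{(\mathsf{cpk}, \mathsf{exc})}\left(\mathfrak{S}_n; \frac{(1+y)^2t}{(y+t)(1+yt)}, \frac{y+t}{1+yt}\right),$$ equivalently, $$P^{(\mathsf{cpk},\mathsf{exc})}\left(\mathfrak{S}_n; y,t\right)=\frac{1}{(1+uv)^{n}}B_{n}(u,v),$$ where $u=\frac{1+t^{2}-2yt-(1-t)\sqrt{(1+t)^{2}-4yt}}{2(1-y)t}$ and $v=\frac{(1+t)^{2}-2yt-(1+t)\sqrt{(1+t)^{2}-4yt}}{2yt}$.
   Context: $\mathcal{B}_n$ is the set of permutations $\sigma$ of $\{\pm1,\dots,\pm n\}$ with $\sigma(-i)=-\sigma(i)$; $\mathsf{neg}\,\sigma=\#\{i\in[n]:\sigma(i)<0\}$; $\mathsf{des}_B\,\sigma=\#\{i\in\{0,\dots,n-1\}:\sigma(i)>\sigma(i+1)\}$ with $\sigma(0)=0$ and the natural order. $\mathfrak{S}_n$ is the set of permutations of $[n]$; $P^{(\mathsf{cpk},\mathsf{exc})}(\mathfrak{S}_n;a,b)=\sum_{\sigma\in\mathfrak{S}_n}a^{\mathsf{cpk}\,\sigma}b^{\mathsf{exc}\,\sigma}$, where $\mathsf{exc}\,\sigma=\#\{i:\sigma(i)>i\}$ and $\mathsf{cpk}\,\sigma=\#\{x\in[n]:\sigma^{-1}(x)<x>\sigma(x)\}$.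 *)

From mathcomp Require Import all_boot all_order all_fingroup all_algebra.
Set Implicit Arguments. Unset Strict Implicit. Unset Printing Implicit Defensive.
Import Order.TTheory GRing.Theory Num.Theory.
Local Open Scope ring_scope.

(* The set {+-1,...,+-n} is encoded by the finite type
   [bool * 'I_n]: the element (b, i) stands for the integer
   (if b then -(i+1) else i+1). *)
Definition sval n (x : bool * 'I_n) : int :=
  if x.1 then - (x.2.+1 : nat)%:Z else (x.2.+1 : nat)%:Z.

Definition sneg n (x : bool * 'I_n) : bool * 'I_n := (~~ x.1, x.2).

Definition signed_perms n : {set {perm (bool * 'I_n)}} :=
  [set s : {perm (bool * 'I_n)} | [forall x, s (sneg x) == sneg (s x)]].

Definition sigma_at n (s : {perm (bool * 'I_n)}) (i : 'I_n) : int :=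
  sval (s (false, i)).

Definition negB n (s : {perm (bool * 'I_n)}) : nat :=
  #|[set i : 'I_n | sigma_at s i < 0]|.

Definition sword n (s : {perm (bool * 'I_n)}) : seq int :=
  0 :: [seq sigma_at s i | i <- enum 'I_n].

Definition desB n (s : {perm (bool * 'I_n)}) : nat :=
  \sum_(i < n) (nth 0 (sword s) i.+1 < nth 0 (sword s) i)%R.

Definition Bpoly (R : comPzRingType) n (y t : R) : R :=
  \sum_(s in signed_perms n) y ^+ negB s * t ^+ desB s.

(* Ordinary permutations of [n], encoded as 'S_n acting on 'I_n = {0..n-1};
   exc and cpk are invariant under the shift i |-> i+1. *)
Definition exc n (s : 'S_n) : nat := #|[set i : 'I_n | (i < s i)%N]|.
Definition cpk n (s : 'S_n) : nat :=
  #|[set x : 'I_n | (((s^-1)%g x < x)%N && (s x < x)%N)]|.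

Definition Pcpkexc (R : comPzRingType) n (a b : R) : R :=
  \sum_(s : 'S_n) a ^+ cpk s * b ^+ exc s.

(* For fixed y, both sides of the first identity are values at t
   of polynomials F_n satisfying F_0 = 1 and
     F_(n+1) = (1 + (n (1 + y) + y) t) F_n + (1 + y) t (1 - t) F_n'.
   For B_n this comes from inserting +-(n+1) into the window of a signed
   permutation: at an inner descent slot neither sign changes des_B, at an
   inner ascent slot both add one, and at the end only -(n+1) adds one.
   On the other side, (1 + yt)^n P^(cpk,exc)(S_n; ...) is the sum over sigma of
   ((1+y)^2 t)^cpk (y+t)^(exc-cpk) (1+yt)^(n-exc-cpk); inserting n+1 into the
   cycles of sigma after k (or as a fixed point) changes (cpk, exc) in one of
   four ways, depending on whether k or sigma(k) is a cyclic peak and whether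
   k is an excedance, and the four counts give the same recurrence.
   The second identity inverts the first: the given u, v simplify to
   (D+t-1)/(D-t+1) and (1+t-D)/(1+t+D), for which (u+v)/(1+uv) = t and
   (1+u)^2 v / ((u+v)(1+uv)) = y.  Neither identity needs n >= 1. *)

From Pilot Require Import Defs.
From mathcomp Require Import all_boot all_order all_fingroup all_algebra.
From mathcomp Require Import ring zify.
Set Implicit Arguments. Unset Strict Implicit. Unset Printing Implicit Defensive.
Import Order.TTheory GRing.Theory Num.Theory.
Local Open Scope ring_scope.

Lemma card_set_sum (T : finType) (P : pred T) : #|[set x | P x]| = (\sum_x P x)%N.
Proof. by rewrite -sum1dep_card big_mkcond; apply: eq_bigr => x _; case: (P x). Qed.

Lemma reindex_card (T1 T2 : finType) (V : nmodType) (f : T1 -> T2) (F : T2 -> V) :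
  injective f -> (#|T2| <= #|T1|)%N -> \sum_(x : T2) F x = \sum_(z : T1) F (f z).
Proof. by move=> f_inj le_card; rewrite (reindex f) //; apply/onW_bij/inj_card_bij. Qed.

Section EulerianOperator.
Variables (R : comNzRingType) (y : R).

Definition eulerian_op (n : nat) (F : {poly R}) : {poly R} :=
  (1 + (n%:R * (1 + y%:P) + y%:P) * 'X) * F + (1 + y%:P) * (1 - 'X) * ('X * F^`()).

Lemma eulerian_op_sum n (I : finType) (F : I -> {poly R}) :
  eulerian_op n (\sum_i F i) = \sum_i eulerian_op n (F i).
Proof. by rewrite /eulerian_op raddf_sum !mulr_sumr -big_split. Qed.

Lemma Xderiv_exp (p : {poly R}) k : 'X * (p ^+ k)^`() = k%:R * ('X * p^`()) * p ^+ k.-1.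
Proof. by rewrite deriv_exp -mulr_natl; ring. Qed.

Lemma eulerian_op_monomial n k d :
  eulerian_op n (y%:P ^+ k * 'X^d) =
    (1 + y%:P) * y%:P ^+ k * (d%:R * 'X^d + (n%:R - d%:R) * 'X^(d.+1))
    + y%:P ^+ k * 'X^d + y%:P ^+ k.+1 * 'X^(d.+1).
Proof.
rewrite /eulerian_op; have -> : 'X * (y%:P ^+ k * 'X^d)^`() = d%:R * (y%:P ^+ k * 'X^d).
  rewrite derivM deriv_exp derivC derivXn mul0r mul0rn mul0r add0r.
  by case: d => [|d]; rewrite ?mul0rn ?mulr0 ?mul0r // -mulr_natr /= exprS; ring.
by rewrite !exprS; ring.
Qed.

Definition gamma_weight (a b c : nat) : {poly R} :=
  ((1 + y%:P) ^+ 2 * 'X) ^+ a * (y%:P + 'X) ^+ b * (1 + y%:P * 'X) ^+ c.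

Lemma eulerian_op_gamma_weight a b c :
  eulerian_op (a + a + b + c) (gamma_weight a b c) =
    a%:R * gamma_weight a b.+1 c + a.+1%:R * gamma_weight a b c.+1
    + b%:R * gamma_weight a.+1 b.-1 c + c%:R * gamma_weight a.+1 b c.-1.
Proof.
set p := (1 + y%:P) ^+ 2 * 'X; set q := y%:P + 'X; set r := 1 + y%:P * 'X.
have dp : 'X * p^`() = p by rewrite /p derivM derivX deriv_exp !derivE; ring.
have dq : 'X * q^`() = 'X by rewrite /q !derivE; ring.
have dr : 'X * r^`() = y%:P * 'X by rewrite /r !derivE; ring.
have dpa : 'X * (p ^+ a)^`() = a%:R * p ^+ a.
  by rewrite Xderiv_exp dp; case: a => [|a]; rewrite ?mul0r // exprS; ring.
rewrite /eulerian_op; have -> : 'X * (gamma_weight a b c)^`() =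
    'X * (p ^+ a)^`() * q ^+ b * r ^+ c + p ^+ a * ('X * (q ^+ b)^`()) * r ^+ c
    + p ^+ a * q ^+ b * ('X * (r ^+ c)^`()) by rewrite /gamma_weight !derivM; ring.
rewrite dpa !Xderiv_exp dq dr /gamma_weight -/p -/q -/r !natrD.
by case: b => [|b]; case: c => [|c]; rewrite ?mul0r ?addr0 ?exprS /= /p /q /r; ring.
Qed.

End EulerianOperator.

Definition cpeak n (s : 'S_n) (x : 'I_n) : bool := ((s^-1)%g x < x)%N && (s x < x)%N.

Lemma excE n (s : 'S_n) : exc s = (\sum_(k < n) ((k < s k)%N : nat))%N.
Proof. exact: card_set_sum. Qed.

Lemma cpkE n (s : 'S_n) : cpk s = (\sum_(k < n) (cpeak s k : nat))%N.
Proof. exact: card_set_sum. Qed.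

Lemma cpeak_exc_le1 n (s : 'S_n) k : (cpeak s k + (k < s k) <= 1)%N.
Proof.
case/boolP: (cpeak s k) => [/andP[_ lt_k] | _]; last by case: (k < s k)%N.
by rewrite ltnNge (ltnW lt_k).
Qed.

Lemma cpeak_perm_le_exc n (s : 'S_n) k : (cpeak s (s k) <= (k < s k))%N.
Proof. by rewrite /cpeak permK; case: (k < s k)%N; case: (s (s k) < s k)%N. Qed.

Lemma sum_cpeak_perm n (s : 'S_n) : (\sum_(k < n) (cpeak s (s k) : nat))%N = cpk s.
Proof. by rewrite cpkE [RHS](reindex_inj (@perm_inj _ s)). Qed.

Lemma cpk_le_exc n (s : 'S_n) : (cpk s <= exc s)%N.
Proof.
by rewrite -sum_cpeak_perm excE; apply: leq_sum => k _; apply: cpeak_perm_le_exc.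
Qed.

Lemma cpk_exc_le n (s : 'S_n) : (cpk s + exc s <= n)%N.
Proof.
rewrite cpkE excE -big_split /= -[leqRHS]card_ord -sum1_card.
by apply: leq_sum => k _; apply: cpeak_exc_le1.
Qed.

(* [cycle_ins (lift ord_max k) s] inserts [ord_max] into the cycle of [s] right
   after [k]; [cycle_ins ord_max s] adds it as a fixed point. *)
Definition cycle_ins n (k : 'I_n.+1) (s : 'S_n) : 'S_n.+1 :=
  (tperm k ord_max * lift_perm ord_max ord_max s)%g.

Lemma cycle_ins_inj n : injective (fun z : 'I_n.+1 * 'S_n => cycle_ins z.1 z.2).
Proof.
move=> [k s] [k' s'] /= eq_ins.
have eq_k : k = k'.
  apply: (@perm_inj _ (cycle_ins k s)).
  by rewrite {2}eq_ins !permM !tpermL !lift_perm_id.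
subst k'; have eq_lift : lift_perm ord_max ord_max s = lift_perm ord_max ord_max s'.
  move: eq_ins => /(congr1 (fun x => tperm k ord_max * x)%g).
  by rewrite /cycle_ins !mulgA tperm2 !mul1g.
congr (_, _); apply/permP => i; apply: (@lift_inj _ ord_max).
by rewrite -!(@lift_perm_lift _ ord_max) eq_lift.
Qed.

Lemma sum_cycle_ins n (V : nmodType) (F : 'S_n.+1 -> V) :
  \sum_(s : 'S_n.+1) F s = \sum_(s : 'S_n) \sum_(k : 'I_n.+1) F (cycle_ins k s).
Proof.
rewrite (reindex_card F (@cycle_ins_inj n)); last by rewrite card_prod !card_Sn card_ord factS.
by rewrite -(pair_big xpredT xpredT (fun j s => F (cycle_ins j s))) exchange_big.
Qed.

Lemma widen_lift_max n (k : 'I_n) : widen_ord (leqnSn n) k = lift ord_max k.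
Proof. by apply: val_inj; rewrite /= /bump leqNgt ltn_ord. Qed.

Lemma exc_fixed_point n (s : 'S_n) : exc (cycle_ins ord_max s) = exc s.
Proof.
rewrite !excE big_ord_recr /= /cycle_ins tperm1 mul1g lift_perm_id ltnn addn0.
by apply: eq_bigr => k _; rewrite widen_lift_max lift_perm_lift !lift_max.
Qed.

Lemma cpk_fixed_point n (s : 'S_n) : cpk (cycle_ins ord_max s) = cpk s.
Proof.
rewrite !cpkE big_ord_recr /= /cycle_ins tperm1 mul1g /cpeak lift_permV.
rewrite !lift_perm_id ltnn andbF addn0; apply: eq_bigr => k _.
by rewrite widen_lift_max !lift_perm_lift !lift_max.
Qed.

Lemma cycle_ins_lift n (s : 'S_n) (k0 k : 'I_n) :
  cycle_ins (lift ord_max k0) s (lift ord_max k) =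
  if k == k0 then ord_max else lift ord_max (s k).
Proof.
rewrite permM; case: eqP => [->|/eqP neq]; first by rewrite tpermL lift_perm_id.
by rewrite tpermD ?lift_perm_lift ?neq_lift // (inj_eq (@lift_inj _ _)) eq_sym.
Qed.

Lemma cycle_ins_lift_max n (s : 'S_n) (k0 : 'I_n) :
  cycle_ins (lift ord_max k0) s ord_max = lift ord_max (s k0).
Proof. by rewrite permM tpermR lift_perm_lift. Qed.

Lemma cycle_insV_lift n (s : 'S_n) (k0 k : 'I_n) :
  ((cycle_ins (lift ord_max k0) s)^-1)%g (lift ord_max k) =
  if (s^-1)%g k == k0 then ord_max else lift ord_max ((s^-1)%g k).
Proof.
rewrite invMg tpermV lift_permV permM lift_perm_lift; case: eqP => [->|/eqP neq].
  by rewrite tpermL.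
by rewrite tpermD ?neq_lift // (inj_eq (@lift_inj _ _)) eq_sym.
Qed.

Lemma cycle_insV_max n (s : 'S_n) (k0 : 'I_n) :
  ((cycle_ins (lift ord_max k0) s)^-1)%g ord_max = lift ord_max k0.
Proof. by rewrite invMg tpermV lift_permV permM lift_perm_id tpermR. Qed.

Lemma exc_cycle_ins n (s : 'S_n) (k0 : 'I_n) :
  (exc (cycle_ins (lift ord_max k0) s) + (k0 < s k0) = exc s + 1)%N.
Proof.
rewrite !excE big_ord_recr /= cycle_ins_lift_max lift_max ltnNge ltnW //= addn0.
rewrite (bigD1 k0) //= [in RHS](bigD1 k0) //= widen_lift_max cycle_ins_lift eqxx /= ltn_ord.
under eq_bigr => k /negbTE neq do rewrite widen_lift_max cycle_ins_lift neq lift_max.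
by rewrite addnAC [RHS]addnC [RHS]addnA.
Qed.

Lemma cpeak_cycle_ins n (s : 'S_n) (k0 k : 'I_n) :
  cpeak (cycle_ins (lift ord_max k0) s) (lift ord_max k) =
  [&& k != s k0, k != k0 & cpeak s k].
Proof.
rewrite /cpeak cycle_insV_lift cycle_ins_lift.
have -> : ((s^-1)%g k == k0) = (k == s k0).
  by apply/eqP/eqP => [<-|->]; rewrite ?permKV ?permK.
have bump_max (j : 'I_n) : bump n j = j by rewrite /bump leqNgt ltn_ord.
case: (k == s k0) => /=; rewrite !bump_max; first by rewrite ltnNge ltnW.
by case: (k == k0) => /=; rewrite ?bump_max // andbC ltnNge ltnW.
Qed.

Lemma sum_bool_D2 (T : finType) (P : pred T) a b : (a == b -> ~~ P a) ->
  (\sum_x [&& x != b, x != a & P x] + P a + P b = \sum_x P x)%N.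
Proof.
move=> Pab; have split_P x : (P x : nat) =
    ([&& x != b, x != a & P x] + (x == a) * P a + (x == b) * P b)%N.
  case: (eqVneq x a) => [->|neq_a]; case: (eqVneq a b) => [eq_ab|neq_ab].
  - by subst b; move: (Pab (eqxx _)) => /negbTE ->.
  - by case: (P a).
  - by case: (eqVneq x b) => [->|] /=; case: (P _).
  - by case: (eqVneq x b) => [->|] /=; rewrite ?muln0 ?addn0 ?mul1n; case: (P _).
have sum_eq (c : T) (m : nat) : (\sum_x ((x == c) * m) = m)%N.
  by rewrite (bigD1 c) //= eqxx mul1n big1 ?addn0 // => x /negbTE ->.
by rewrite (eq_bigr _ (fun x _ => split_P x)) !big_split /= !sum_eq.
Qed.

Lemma cpk_cycle_ins n (s : 'S_n) (k0 : 'I_n) :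
  (cpk (cycle_ins (lift ord_max k0) s) + cpeak s k0 + cpeak s (s k0) = cpk s + 1)%N.
Proof.
rewrite !cpkE big_ord_recr /=.
have -> : cpeak (cycle_ins (lift ord_max k0) s) ord_max.
  by rewrite /cpeak cycle_insV_max cycle_ins_lift_max !lift_max !ltn_ord.
under eq_bigr => k _ do rewrite widen_lift_max cpeak_cycle_ins.
rewrite -(@sum_bool_D2 _ (cpeak s) k0 (s k0)); first by rewrite -!addnA; congr (_ + _)%N; lia.
by move=> /eqP eq_k0; rewrite /cpeak -eq_k0 ltnn andbF.
Qed.

Definition perm_weight (R : comNzRingType) (y : R) n (s : 'S_n) : {poly R} :=
  gamma_weight y (cpk s) (exc s - cpk s) (n - exc s - cpk s).

Lemma perm_weight_cycle_ins (R : comNzRingType) (y : R) n (s : 'S_n) (k0 : 'I_n) :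
  let a := cpk s in let b := (exc s - cpk s)%N in let c := (n - exc s - cpk s)%N in
  perm_weight y (cycle_ins (lift ord_max k0) s) =
    if cpeak s k0 then gamma_weight y a b.+1 c
    else if cpeak s (s k0) then gamma_weight y a b c.+1
    else if (k0 < s k0)%N then gamma_weight y a.+1 b.-1 c
    else gamma_weight y a.+1 b c.-1.
Proof.
move=> a b c; rewrite /perm_weight /a /b /c.
move: (cpk_cycle_ins s k0) (exc_cycle_ins s k0) (cpk_le_exc s) (cpk_exc_le s).
move: (cpeak_exc_le1 s k0) (cpeak_perm_le_exc s k0).
case: (cpeak s k0); case: (cpeak s (s k0)); case: (k0 < s k0)%N => /= *;
  congr (gamma_weight y _ _ _); lia.
Qed.

Lemma sum_perm_weight_cycle_ins (R : comNzRingType) (y : R) n (s : 'S_n) :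
  \sum_(k < n.+1) perm_weight y (cycle_ins k s) = eulerian_op y n (perm_weight y s).
Proof.
set a := cpk s; set b := (exc s - a)%N; set c := (n - exc s - a)%N.
have exc_eq : exc s = (a + b)%N by have := cpk_le_exc s; rewrite /b; lia.
have n_eq : n = (a + a + b + c)%N by have := cpk_exc_le s; rewrite /c; lia.
have -> : eulerian_op y n (perm_weight y s) =
  eulerian_op y (a + a + b + c) (gamma_weight y a b c) by rewrite -n_eq.
rewrite eulerian_op_gamma_weight big_ord_recr /=.
have -> : perm_weight y (cycle_ins ord_max s) = gamma_weight y a b c.+1.
  by rewrite /perm_weight cpk_fixed_point exc_fixed_point -/a; congr gamma_weight; lia.
pose A1 := gamma_weight y a b.+1 c; pose A2 := gamma_weight y a b c.+1.
pose A3 := gamma_weight y a.+1 b.-1 c; pose A4 := gamma_weight y a.+1 b c.-1.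
have weight_lin (k0 : 'I_n) : perm_weight y (cycle_ins (widen_ord (leqnSn n) k0) s) =
    (cpeak s k0)%:R * A1 + (cpeak s (s k0))%:R * A2
    + ((k0 < s k0)%N%:R - (cpeak s (s k0))%:R) * A3
    + (1 - (k0 < s k0)%N%:R - (cpeak s k0)%:R) * A4.
  rewrite widen_lift_max perm_weight_cycle_ins -/a -/b -/c.
  move: (cpeak_exc_le1 s k0) (cpeak_perm_le_exc s k0).
  by case: (cpeak s k0); case: (cpeak s (s k0)); case: (k0 < s k0)%N => //= _ _;
    rewrite /A1 /A2 /A3 /A4; ring.
rewrite (eq_bigr _ (fun k0 _ => weight_lin k0)) !big_split /= -!big_distrl /= !sumrB.
rewrite -!natr_sum sum_cpeak_perm -cpkE -excE sumr_const card_ord -/a exc_eq n_eq !natrD.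
rewrite /A1 /A2 /A3 /A4; ring.
Qed.

Fixpoint descents (a : int) (l : seq int) : nat :=
  if l is b :: l' then ((b < a)%R + descents b l')%N else 0%N.

Definition descent_at (a : int) (l : seq int) (j : nat) : bool := nth 0 l j < nth 0 (a :: l) j.

Definition insert_at (T : Type) (j : nat) (x : T) (l : seq T) : seq T :=
  take j l ++ x :: drop j l.

Lemma descents_cat a l1 l2 :
  descents a (l1 ++ l2) = (descents a l1 + descents (last a l1) l2)%N.
Proof. by elim: l1 a => [|b l1 IH] a //=; rewrite IH addnA. Qed.

Lemma descentsE a l : descents a l = (\sum_(j < size l) descent_at a l j)%N.
Proof.
elim: l a => [|b l IH] a /=; first by rewrite big_ord0.
by rewrite big_ord_recl IH.
Qed.

Lemma last_take (a : int) l j : (j <= size l)%N -> last a (take j l) = nth 0 (a :: l) j.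
Proof.
by case: j => [|j] le_j; [case: l le_j | rewrite (last_nth 0) size_takel //= nth_take].
Qed.

(* Inserting [x] between [p := nth 0 (a :: l) j] and [q := nth 0 l j] trades
   the descent [q < p] for the two descents [x < p] and [q < x]. *)
Lemma descents_insert (a : int) (l : seq int) (j : nat) (x : int) : (j <= size l)%N ->
  (descents a (insert_at j x l) + ((j < size l) && descent_at a l j) =
   descents a l + (x < nth 0 (a :: l) j)%R + ((j < size l) && (nth 0 l j < x)%R))%N.
Proof.
move=> le_j; have := descents_cat a (take j l) (drop j l); rewrite cat_take_drop => ->.
rewrite /insert_at descents_cat /= last_take // /descent_at.
case: ltnP => [lt_j | ge_j]; last by rewrite drop_oversize //=; lia.
by rewrite (drop_nth 0 lt_j) /=; lia.
Qed.

Lemma descents_insert_max (a : int) (l : seq int) (j : nat) (x : int) :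
  (j <= size l)%N -> {in a :: l, forall z, z < x} ->
  descents a (insert_at j x l) = (descents a l + ((j < size l) && ~~ descent_at a l j))%N.
Proof.
move=> le_j x_max; have := @descents_insert a l j x le_j.
rewrite (lt_gtF (x_max _ _)) ?mem_nth //=.
case: (ltnP j (size l)) => [lt_j | _] /=; last by lia.
by rewrite x_max ?inE ?mem_nth ?orbT //; case: (descent_at a l j) => /=; lia.
Qed.

Lemma descents_insert_min (a : int) (l : seq int) (j : nat) (x : int) :
  (j <= size l)%N -> {in a :: l, forall z, x < z} ->
  descents a (insert_at j x l) = (descents a l + ~~ ((j < size l) && descent_at a l j))%N.
Proof.
move=> le_j x_min; have := @descents_insert a l j x le_j.
rewrite x_min ?mem_nth //=.
case: (ltnP j (size l)) => [lt_j | _] /=; last by lia.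
by rewrite lt_gtF ?x_min ?inE ?mem_nth ?orbT //; case: (descent_at a l j) => /=; lia.
Qed.

Lemma enum_ord_insert n (j : 'I_n.+1) :
  enum 'I_n.+1 = insert_at j j (map (lift j) (enum 'I_n)).
Proof.
apply: (inj_map val_inj); rewrite /insert_at map_cat /= map_take map_drop.
have -> : map val (map (lift j) (enum 'I_n)) = map (bump j) (iota 0 n).
  by rewrite -map_comp -val_enum_ord -map_comp.
rewrite val_enum_ord -map_take -map_drop take_iota drop_iota.
have le_j : (j <= n)%N by rewrite -ltnS.
rewrite (minn_idPl le_j) add0n.
have -> : map (bump j) (iota 0 j) = iota 0 j.
  rewrite -[RHS]map_id; apply/eq_in_map => i; rewrite mem_iota /= add0n => lt_i.
  by rewrite /bump leqNgt lt_i.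
have -> : map (bump j) (iota j (n - j)) = iota j.+1 (n - j).
  rewrite -(addn1 j) addnC iotaDl; apply/eq_in_map => i; rewrite mem_iota => /andP[ge_i _].
  by rewrite /bump ge_i addnC.
have n1_eq : n.+1 = (j + (n - j).+1)%N by lia.
by rewrite [in iota 0 n.+1]n1_eq iotaD add0n.
Qed.

(* A pair [(p, e)] encodes the signed permutation [i |-> (-1)^(e i) (p i + 1)]. *)
Definition signed_perm_fun n (z : 'S_n * {ffun 'I_n -> bool}) (x : bool * 'I_n) :
  bool * 'I_n := (x.1 (+) z.2 x.2, z.1 x.2).

Lemma signed_perm_fun_inj n z : injective (@signed_perm_fun n z).
Proof. by move=> [b i] [b' i'] [] /= /[swap] /perm_inj <- /addIb ->. Qed.

Definition signed_perm n z : {perm (bool * 'I_n)} := perm (@signed_perm_fun_inj n z).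

Lemma signed_perm_inj n : injective (@signed_perm n).
Proof.
move=> [p e] [p' e'] eq_sp.
have eq_at i : signed_perm (p, e) (false, i) = signed_perm (p', e') (false, i) by rewrite eq_sp.
congr (_, _); [apply/permP | apply/ffunP] => i; by move: (eq_at i); rewrite !permE => -[].
Qed.

Lemma signed_permsE n :
  signed_perms n = [set signed_perm z | z in [set: 'S_n * {ffun 'I_n -> bool}]].
Proof.
apply/setP => s; rewrite inE; apply/idP/imsetP => [/forallP odd_s | [z _ ->]]; last first.
  by apply/forallP => x; rewrite !permE /signed_perm_fun /sneg /= addNb.
have {}odd_s x : s (sneg x) = sneg (s x) by apply/eqP.
have abs_inj : injective (fun i => (s (false, i)).2).
  move=> i j /=; case Ei: (s (false, i)) => [bi i']; case Ej: (s (false, j)) => [bj j'].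
  move=> /= eq_ij; subst j'; case: (eqVneq bi bj) => [eq_b | neq_b].
    by subst bj; rewrite -Ej in Ei; case: (perm_inj Ei).
  have : s (true, j) = s (false, i).
    rewrite -[(true, j)]/(sneg (false, j)) odd_s Ej Ei /sneg /=.
    by congr (_, _); move: neq_b; case: (bi); case: (bj).
  by move/perm_inj.
exists (perm abs_inj, [ffun i => (s (false, i)).1]); first by rewrite inE.
apply/permP => -[b i]; rewrite permE /signed_perm_fun /= ffunE permE /=.
case: b => /=; last by case: (s (false, i)).
by rewrite -[(true, i)]/(sneg (false, i)) odd_s; case: (s (false, i)).
Qed.

Definition signed_word n (p : 'S_n) (e : {ffun 'I_n -> bool}) : seq int :=
  [seq Defs.sval (e i, p i) | i <- enum 'I_n].

Definition nneg n (e : {ffun 'I_n -> bool}) : nat := (\sum_i e i)%N.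

Lemma size_signed_word n (p : 'S_n) e : size (signed_word p e) = n.
Proof. by rewrite size_map size_enum_ord. Qed.

Lemma sigma_at_signed_perm n (z : 'S_n * {ffun 'I_n -> bool}) i :
  sigma_at (signed_perm z) i = Defs.sval (z.2 i, z.1 i).
Proof. by rewrite /sigma_at permE. Qed.

Lemma negB_signed_perm n (z : 'S_n * {ffun 'I_n -> bool}) : negB (signed_perm z) = nneg z.2.
Proof.
rewrite /negB card_set_sum; apply: eq_bigr => i _.
by rewrite sigma_at_signed_perm /Defs.sval; case: (z.2 i) => /=; lia.
Qed.

Lemma desB_signed_perm n (z : 'S_n * {ffun 'I_n -> bool}) :
  desB (signed_perm z) = descents 0 (signed_word z.1 z.2).
Proof.
rewrite /desB.
have -> : sword (signed_perm z) = 0 :: signed_word z.1 z.2.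
  by congr (_ :: _); apply: eq_map => i; rewrite sigma_at_signed_perm.
by rewrite descentsE; move: (signed_word _ _) (size_signed_word z.1 z.2) => w <-.
Qed.

Definition ffun_insert n (j : 'I_n.+1) (b : bool) (e : {ffun 'I_n -> bool}) :
  {ffun 'I_n.+1 -> bool} := [ffun i => if unlift j i is Some m then e m else b].

Lemma ffun_insert_at n j b (e : {ffun 'I_n -> bool}) : ffun_insert j b e j = b.
Proof. by rewrite ffunE unlift_none. Qed.

Lemma ffun_insert_lift n j b (e : {ffun 'I_n -> bool}) m : ffun_insert j b e (lift j m) = e m.
Proof. by rewrite ffunE liftK. Qed.

Lemma nneg_insert n j b (e : {ffun 'I_n -> bool}) : nneg (ffun_insert j b e) = (b + nneg e)%N.
Proof.
rewrite /nneg (bigD1_ord j) //= ffun_insert_at; congr (_ + _)%N.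
by apply: eq_bigr => i _; rewrite ffun_insert_lift.
Qed.

Lemma signed_word_insert n (j : 'I_n.+1) b (p : 'S_n) e :
  signed_word (lift_perm j ord_max p) (ffun_insert j b e) =
  insert_at j (Defs.sval (b, ord_max : 'I_n.+1)) (signed_word p e).
Proof.
rewrite /signed_word {1}(enum_ord_insert j) /insert_at map_cat /= map_take map_drop.
rewrite -!map_comp ffun_insert_at lift_perm_id.
congr (take _ _ ++ _ :: drop _ _); apply: eq_map => m /=;
  by rewrite ffun_insert_lift lift_perm_lift /Defs.sval /= /bump leqNgt ltn_ord.
Qed.

Lemma signed_word_bound n (p : 'S_n) e z :
  z \in 0 :: signed_word p e -> (- (n%:Z) <= z <= n%:Z)%R.
Proof.
rewrite inE => /orP[/eqP -> | /mapP[i _ ->]]; first by lia.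
by have := ltn_ord (p i); rewrite /Defs.sval /=; case: (e i) => /=; lia.
Qed.

Definition signed_ins n (z : ('I_n.+1 * bool) * ('S_n * {ffun 'I_n -> bool})) :
  'S_n.+1 * {ffun 'I_n.+1 -> bool} :=
  (lift_perm z.1.1 ord_max z.2.1, ffun_insert z.1.1 z.1.2 z.2.2).

Lemma signed_ins_inj n : injective (@signed_ins n).
Proof.
move=> [[j b] [p e]] [[j' b'] [p' e']] [] /= eq_p eq_e.
have eq_j : j = j'.
  by apply: (@perm_inj _ (lift_perm j' ord_max p')); rewrite -{1}eq_p !lift_perm_id.
subst j'; have eq_b : b = b' by rewrite -(ffun_insert_at j b e) eq_e ffun_insert_at.
subst b'; congr (_, (_, _)).
  apply/permP => m; apply: (@lift_inj _ ord_max).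
  by rewrite -!(@lift_perm_lift _ j) eq_p.
by apply/ffunP => m; rewrite -(ffun_insert_lift j b e) eq_e ffun_insert_lift.
Qed.

Lemma sum_signed_ins n (V : nmodType) (F : 'S_n.+1 * {ffun 'I_n.+1 -> bool} -> V) :
  \sum_z F z = \sum_(z : 'S_n * {ffun 'I_n -> bool})
                 \sum_(j : 'I_n.+1) \sum_(b : bool) F (signed_ins ((j, b), z)).
Proof.
rewrite (reindex_card F (@signed_ins_inj n)); last first.
  by rewrite !card_prod !card_Sn !card_ffun !card_ord card_bool factS expnS; lia.
rewrite -(pair_big xpredT xpredT (fun jb z => F (signed_ins (jb, z)))) exchange_big /=.
apply: eq_bigr => z _.
by rewrite -(pair_big xpredT xpredT (fun j b => F (signed_ins ((j, b), z)))).
Qed.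

Definition signed_term (R : comNzRingType) (y : R) n (z : 'S_n * {ffun 'I_n -> bool}) :
  {poly R} := y%:P ^+ nneg z.2 * 'X^(descents 0 (signed_word z.1 z.2)).

Lemma sum_Xn_addNb (R : comNzRingType) n d (f : 'I_n -> bool) :
  \sum_(j < n) 'X^(d + ~~ f j) =
  (\sum_j f j)%N%:R * 'X^d + (n%:R - (\sum_j f j)%N%:R) * 'X^(d.+1) :> {poly R}.
Proof.
rewrite (eq_bigr (fun j => (f j)%:R * 'X^d + (1 - (f j)%:R) * 'X^(d.+1))); last first.
  by move=> j _; case: (f j); rewrite /= ?addn0 ?addn1; ring.
by rewrite big_split /= -!big_distrl /= sumrB natr_sum sumr_const card_ord.
Qed.

Lemma sum_signed_term_ins (R : comNzRingType) (y : R) n (z : 'S_n * {ffun 'I_n -> bool}) :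
  \sum_(j : 'I_n.+1) \sum_(b : bool) signed_term y (signed_ins ((j, b), z)) =
  eulerian_op y n (signed_term y z).
Proof.
case: z => p e; rewrite /signed_term /=.
under eq_bigr => j _ do rewrite big_bool /= !nneg_insert !signed_word_insert.
set w := signed_word p e; set k := nneg e; set d := descents 0 w.
have size_w : size w = n by apply: size_signed_word.
set top := Defs.sval (false, ord_max : 'I_n.+1).
set bot := Defs.sval (true, ord_max : 'I_n.+1).
have top_gt x : x \in 0 :: w -> (x < top)%R.
  by move/signed_word_bound; rewrite /top /Defs.sval /=; lia.
have bot_lt x : x \in 0 :: w -> (bot < x)%R.
  by move/signed_word_bound; rewrite /bot /Defs.sval /=; lia.
have ins_top j : (j <= n)%N ->
    descents 0 (insert_at j top w) = (d + ((j < n) && ~~ descent_at 0 w j))%N.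
  by move=> le_j; rewrite descents_insert_max ?size_w // => x /top_gt.
have ins_bot j : (j <= n)%N ->
    descents 0 (insert_at j bot w) = (d + ~~ ((j < n) && descent_at 0 w j))%N.
  by move=> le_j; rewrite descents_insert_min ?size_w // => x /bot_lt.
rewrite big_ord_recr /= ins_top // ins_bot // ltnn /= addn0 addn1.
have ins_top_lt (j : 'I_n) : descents 0 (insert_at j top w) = (d + ~~ descent_at 0 w j)%N.
  by rewrite ins_top ?ltn_ord // ltnW.
have ins_bot_lt (j : 'I_n) : descents 0 (insert_at j bot w) = (d + ~~ descent_at 0 w j)%N.
  by rewrite ins_bot ?ltn_ord // ltnW.
under eq_bigr => j _ do rewrite ins_top_lt ins_bot_lt -mulrDl.
have sum_desc : (\sum_(j < n) descent_at 0 w j)%N = d by rewrite /d descentsE size_w.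
rewrite -mulr_sumr sum_Xn_addNb sum_desc eulerian_op_monomial add1n add0n !exprS; ring.
Qed.

Definition negdes_poly (R : comNzRingType) (y : R) n : {poly R} :=
  \sum_(z : 'S_n * {ffun 'I_n -> bool}) signed_term y z.

Definition cpkexc_poly (R : comNzRingType) (y : R) n : {poly R} :=
  \sum_(s : 'S_n) perm_weight y s.

Lemma negdes_polyS (R : comNzRingType) (y : R) n :
  negdes_poly y n.+1 = eulerian_op y n (negdes_poly y n).
Proof.
rewrite /negdes_poly sum_signed_ins eulerian_op_sum.
by apply: eq_bigr => z _; apply: sum_signed_term_ins.
Qed.

Lemma cpkexc_polyS (R : comNzRingType) (y : R) n :
  cpkexc_poly y n.+1 = eulerian_op y n (cpkexc_poly y n).
Proof.
rewrite /cpkexc_poly sum_cycle_ins eulerian_op_sum.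
by apply: eq_bigr => s _; apply: sum_perm_weight_cycle_ins.
Qed.

Lemma negdes_poly0 (R : comNzRingType) (y : R) : negdes_poly y 0 = 1.
Proof.
rewrite /negdes_poly (eq_bigr (fun _ => 1)) => [|[p e] _].
  by rewrite sumr_const card_prod card_Sn card_ffun !card_ord.
by rewrite /signed_term /nneg big_ord0 /signed_word (size0nil (size_enum_ord 0)) mulr1.
Qed.

Lemma cpkexc_poly0 (R : comNzRingType) (y : R) : cpkexc_poly y 0 = 1.
Proof.
rewrite /cpkexc_poly (eq_bigr (fun _ => 1)) => [|s _]; first by rewrite sumr_const card_Sn.
by rewrite /perm_weight /gamma_weight cpkE excE !big_ord0 /= !expr0 !mulr1.
Qed.

Lemma negdes_cpkexc_poly (R : comNzRingType) (y : R) n :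
  negdes_poly y n = cpkexc_poly y n.
Proof.
by elim: n => [|n IHn]; rewrite ?negdes_poly0 ?cpkexc_poly0 // negdes_polyS cpkexc_polyS IHn.
Qed.

Lemma Bpoly_negdes_poly (R : comNzRingType) n (y t : R) : Bpoly n y t = (negdes_poly y n).[t].
Proof.
rewrite /Bpoly signed_permsE big_imset /=; last by move=> z1 z2 _ _ /signed_perm_inj.
rewrite /negdes_poly horner_sum; apply: eq_big => [z | z _]; first by rewrite inE.
by rewrite /signed_term hornerM horner_exp hornerC hornerXn negB_signed_perm desB_signed_perm.
Qed.

Lemma gamma_monomial_factor (R : fieldType) (p q r : R) (a e n : nat) :
  (a <= e)%N -> (a + e <= n)%N -> q != 0 -> r != 0 ->
  p ^+ a * q ^+ (e - a) * r ^+ (n - e - a) = r ^+ n * (p / (q * r)) ^+ a * (q / r) ^+ e.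
Proof.
move=> le_ae le_n q0 r0; set b := (e - a)%N; set c := (n - e - a)%N.
have -> : n = (c + a + (b + a))%N by rewrite /b /c; lia.
have -> : e = (b + a)%N by rewrite /b; lia.
by rewrite !exprD !expr_div_n exprMn; field; rewrite !expf_neq0.
Qed.

Lemma Bpoly_Pcpkexc (R : fieldType) n (y t : R) : y + t != 0 -> 1 + y * t != 0 ->
  Bpoly n y t = (1 + y * t) ^+ n *
    Pcpkexc n ((1 + y) ^+ 2 * t / ((y + t) * (1 + y * t))) ((y + t) / (1 + y * t)).
Proof.
move=> q0 r0; rewrite Bpoly_negdes_poly negdes_cpkexc_poly /cpkexc_poly horner_sum.
rewrite /Pcpkexc mulr_sumr; apply: eq_bigr => s _.
by rewrite /perm_weight /gamma_weight !hornerE gamma_monomial_factor ?cpk_le_exc ?cpk_exc_le.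
Qed.

Lemma Pcpkexc_Bpoly (R : fieldType) n (y t u v : R) : t != 0 -> 1 + u * v != 0 ->
  u + v = t * (1 + u * v) -> (1 + u) ^+ 2 * v = y * ((u + v) * (1 + u * v)) ->
  Pcpkexc n y t = Bpoly n u v / (1 + u * v) ^+ n.
Proof.
move=> t0 r0 sum_uv prod_uv; have q0 : u + v != 0 by rewrite sum_uv mulf_neq0.
rewrite (Bpoly_Pcpkexc n q0 r0) prod_uv mulfK ?mulf_neq0 // sum_uv mulfK //.
by rewrite [_ * Pcpkexc _ _ _]mulrC mulfK // expf_neq0.
Qed.

Section SqrtSubstitution.
Variables (R : numFieldType) (y t D : R).
Hypotheses (t0 : t != 0) (den_u0 : D - t + 1 != 0) (den_v0 : 1 + t + D != 0).

Let u := (D + t - 1) / (D - t + 1).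
Let v := (1 + t - D) / (1 + t + D).

Lemma sqrt_subst_sum : u + v = t * (1 + u * v).
Proof. by rewrite /u /v; field; rewrite den_u0 den_v0. Qed.

Lemma sqrt_subst_prod : 4%:R * y * t = (1 + t - D) * (1 + t + D) ->
  (1 + u) ^+ 2 * v = y * ((u + v) * (1 + u * v)).
Proof.
move=> yt_eq; have -> : y = (1 + t - D) * (1 + t + D) / (4%:R * t).
  by rewrite -yt_eq; field.
by rewrite /u /v; field; rewrite den_v0 den_u0 t0.
Qed.

End SqrtSubstitution.

Section SqrtSimplification.
Variables (R : numFieldType) (y t D : R).
Hypotheses (y0 : y != 0) (y1 : y != 1) (t0 : t != 0).
Hypothesis D2 : D ^+ 2 = (1 + t) ^+ 2 - 4%:R * y * t.

Let eq_mod_D2 (l r c : R) : l - r = c * (D ^+ 2 - ((1 + t) ^+ 2 - 4%:R * y * t)) -> l = r.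
Proof. by rewrite D2 subrr mulr0 => /eqP; rewrite subr_eq0 => /eqP. Qed.

Lemma den_v_factor : 4%:R * y * t = (1 + t - D) * (1 + t + D).
Proof. by apply: (@eq_mod_D2 _ _ 1); ring. Qed.

Lemma den_u_factor : 4%:R * (1 - y) * t = (D + t - 1) * (D - t + 1).
Proof. by apply: (@eq_mod_D2 _ _ (-1)); ring. Qed.

Let one_sub_y_neq0 : 1 - y != 0.
Proof. by rewrite subr_eq0 eq_sym. Qed.

Lemma sqrt_u_den_neq0 : D - t + 1 != 0.
Proof.
have : 4%:R * (1 - y) * t != 0 by rewrite !mulf_neq0 ?pnatr_eq0.
by rewrite den_u_factor mulf_eq0 negb_or => /andP[].
Qed.

Lemma sqrt_v_den_neq0 : 1 + t + D != 0.
Proof.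
have : 4%:R * y * t != 0 by rewrite !mulf_neq0 ?pnatr_eq0.
by rewrite den_v_factor mulf_eq0 negb_or => /andP[].
Qed.

Lemma sqrt_subst_u :
  (1 + t ^+ 2 - 2%:R * y * t - (1 - t) * D) / (2%:R * (1 - y) * t) = (D + t - 1) / (D - t + 1).
Proof.
apply/eqP; rewrite eqr_div ?sqrt_u_den_neq0 ?mulf_neq0 ?pnatr_eq0 //; apply/eqP.
by apply: (@eq_mod_D2 _ _ (t - 1)); ring.
Qed.

Lemma sqrt_subst_v :
  ((1 + t) ^+ 2 - 2%:R * y * t - (1 + t) * D) / (2%:R * y * t) = (1 + t - D) / (1 + t + D).
Proof.
apply/eqP; rewrite eqr_div ?sqrt_v_den_neq0 ?mulf_neq0 ?pnatr_eq0 //; apply/eqP.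
by apply: (@eq_mod_D2 _ _ (- (1 + t))); ring.
Qed.

End SqrtSimplification.

Theorem theorem3p16 (R : rcfType) (n : nat) : (1 <= n)%N ->
  (forall y t : R, y + t != 0 -> 1 + y * t != 0 ->
     Bpoly n y t =
     (1 + y * t) ^+ n *
       Pcpkexc n ((1 + y) ^+ 2 * t / ((y + t) * (1 + y * t)))
                 ((y + t) / (1 + y * t)))
  /\
  (forall y t : R, y != 0 -> y != 1 -> t != 0 ->
     0 <= (1 + t) ^+ 2 - 4%:R * y * t ->
     let D := Num.sqrt ((1 + t) ^+ 2 - 4%:R * y * t) in
     let u := (1 + t ^+ 2 - 2%:R * y * t - (1 - t) * D) / (2%:R * (1 - y) * t) in
     let v := ((1 + t) ^+ 2 - 2%:R * y * t - (1 + t) * D) / (2%:R * y * t) in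
     1 + u * v != 0 ->
     Pcpkexc n y t = Bpoly n u v / (1 + u * v) ^+ n).
Proof.
move=> _; split=> [y t | y t y0 y1 t0 disc_ge0 D u v uv0]; first exact: Bpoly_Pcpkexc.
have D2 : D ^+ 2 = (1 + t) ^+ 2 - 4%:R * y * t by rewrite sqr_sqrtr.
have den_u0 := sqrt_u_den_neq0 y1 t0 D2; have den_v0 := sqrt_v_den_neq0 y0 t0 D2.
have uE : u = (D + t - 1) / (D - t + 1) by exact: sqrt_subst_u y1 t0 D2.
have vE : v = (1 + t - D) / (1 + t + D) by exact: sqrt_subst_v y0 t0 D2.
apply: Pcpkexc_Bpoly => //; rewrite uE vE; first exact: sqrt_subst_sum.
exact: sqrt_subst_prod (den_v_factor D2).
Qed.
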